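(* The set $\mathcal{B}_{2,3,4}$ consisting of the identities (M1) $(xy)(zt)=(xz)(yt)$, (M2) $(xy)(zt)=(ty)(zx)$, (M3) $((xy)z)t=((xt)z)y$, (M4) $(x(yz))t=(x(tz))y$, (M5) $x((yz)t)=z((yx)t)$, (M6) $x(y(zt))=z(y(xt))$, and $(xy^2)y^2=x$ is a basis for $\Sigma_{2,3,4}$.
   Context: $y^2$ denotes $yy$. $\Sigma_{2,3,4}$ is the set of groupoid identities satisfied in the integers $\mathbb{Z}$ by each of the binary operations $x-y$, $-x+y$ and $-x-y$. A basis is a set of identities whose equational consequences are exactly $\Sigma_{2,3,4}$. *)

From Stdlib Require Import ZArith List.
Import ListNotations.
Open Scope Z_scope.

Inductive term : Type :=
| Var : nat -> term
| Op : term -> term -> term.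

Fixpoint eval (f : Z -> Z -> Z) (v : nat -> Z) (t : term) : Z :=
  match t with
  | Var n => v n
  | Op a b => f (eval f v a) (eval f v b)
  end.

Definition holds_in (f : Z -> Z -> Z) (s t : term) : Prop :=
  forall v : nat -> Z, eval f v s = eval f v t.

Definition op1 (a b : Z) : Z := a - b.
Definition op2 (a b : Z) : Z := - a + b.
Definition op3 (a b : Z) : Z := - a - b.

Definition Sigma234 (s t : term) : Prop :=
  holds_in op1 s t /\ holds_in op2 s t /\ holds_in op3 s t.

Fixpoint subst (sg : nat -> term) (t : term) : term :=
  match t with
  | Var n => sg n
  | Op a b => Op (subst sg a) (subst sg b)
  end.

Inductive consequence (E : term -> term -> Prop) : term -> term -> Prop :=
| cons_ax : forall s t sg, E s t -> consequence E (subst sg s) (subst sg t)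
| cons_refl : forall t, consequence E t t
| cons_sym : forall s t, consequence E s t -> consequence E t s
| cons_trans : forall s t u,
    consequence E s t -> consequence E t u -> consequence E s u
| cons_cong : forall s1 t1 s2 t2,
    consequence E s1 t1 -> consequence E s2 t2 ->
    consequence E (Op s1 s2) (Op t1 t2).

Definition is_basis (E T : term -> term -> Prop) : Prop :=
  forall s t, consequence E s t <-> T s t.

Definition x := Var 0.
Definition y := Var 1.
Definition z := Var 2.
Definition t := Var 3.

Definition B234_list : list (term * term) :=
  [ (Op (Op x y) (Op z t), Op (Op x z) (Op y t));
    (Op (Op x y) (Op z t), Op (Op t y) (Op z x));
    (Op (Op (Op x y) z) t, Op (Op (Op x t) z) y);
    (Op (Op x (Op y z)) t, Op (Op x (Op t z)) y);
    (Op x (Op (Op y z) t), Op z (Op (Op y x) t));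
    (Op x (Op y (Op z t)), Op z (Op y (Op x t)));
    (Op (Op x (Op y y)) (Op y y), x) ].

Definition B234 (s u : term) : Prop := In (s, u) B234_list.

From Stdlib Require Import ZArith List Lia Setoid Morphisms Bool Wf_nat.
Import ListNotations.
Open Scope Z_scope.

(* The identities hold in (Z, x-y), (Z, -x+y) and (Z, -x-y), which gives soundness.
   For completeness, look at the right translations u ↦ (u a) b. By M3 they commute,
   and by (x y²) y² = x the translation by (b³, a³), where c³ = (c c) c, inverts the
   one by (a, b). Using M1-M6, every term equals x moved by a word in three generating
   translations per variable, and by commutativity the term only depends on the
   exponent of each generator. In each of the three groupoids a translation adds a
   constant to the value; for a valuation supported on a single variable, the three
   groupoids give three independent linear equations for the three exponents of that
   variable. So terms that are equal in all three groupoids have equal exponents,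
   hence are derivably equal. *)

Infix "·" := Op (at level 40, left associativity).
Notation "a ≈ b" := (consequence B234 a b) (at level 70).
Notation cube a := (a · a · a).
Notation x3 := (cube x).

#[global] Instance consequence_Equivalence : Equivalence (consequence B234).
Proof.
  split.
  - exact (cons_refl B234).
  - exact (cons_sym B234).
  - exact (cons_trans B234).
Qed.

#[global] Instance Op_Proper :
  Proper (consequence B234 ==> consequence B234 ==> consequence B234) Op.
Proof. intros a a' Ha b b' Hb. exact (cons_cong B234 _ _ _ _ Ha Hb). Qed.

Definition subst4 (a b c d : term) (n : nat) : term :=
  match n with 0%nat => a | 1%nat => b | 2%nat => c | _ => d end.

Ltac B234_instance l r a b c d :=
  apply (cons_ax B234 l r (subst4 a b c d));
  cbv [B234 B234_list In]; repeat (first [left; reflexivity | right]).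

Lemma M1 a b c d : a · b · (c · d) ≈ a · c · (b · d).
Proof. B234_instance (x · y · (z · t)) (x · z · (y · t)) a b c d. Qed.
Lemma M2 a b c d : a · b · (c · d) ≈ d · b · (c · a).
Proof. B234_instance (x · y · (z · t)) (t · y · (z · x)) a b c d. Qed.
Lemma M3 a b c d : a · b · c · d ≈ a · d · c · b.
Proof. B234_instance (x · y · z · t) (x · t · z · y) a b c d. Qed.
Lemma M4 a b c d : a · (b · c) · d ≈ a · (d · c) · b.
Proof. B234_instance (x · (y · z) · t) (x · (t · z) · y) a b c d. Qed.
Lemma M5 a b c d : a · (b · c · d) ≈ c · (b · a · d).
Proof. B234_instance (x · (y · z · t)) (z · (y · x · t)) a b c d. Qed.
Lemma M6 a b c d : a · (b · (c · d)) ≈ c · (b · (a · d)).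
Proof. B234_instance (x · (y · (z · t))) (z · (y · (x · t))) a b c d. Qed.
Lemma square_cancel a b : a · (b · b) · (b · b) ≈ a.
Proof. B234_instance (x · (y · y) · (y · y)) x a b a a. Qed.

Ltac B234_axiom :=
  first [ apply M1 | apply M2 | apply M3 | apply M4 | apply M5 | apply M6 | apply square_cancel ].

Ltac B234_step :=
  first [ B234_axiom
        | apply cons_sym; B234_axiom
        | apply cons_cong; [apply cons_refl | B234_step]
        | apply cons_cong; [B234_step | apply cons_refl] ].

Tactic Notation "via" constr(s) := apply (cons_trans B234 _ s); [B234_step |].

Lemma translations_commute a b c d u : u · a · b · c · d ≈ u · c · d · a · b.
Proof. via (u · a · d · c · b). B234_step. Qed.

Lemma translation_cancel a b u : u · cube b · cube a · a · b ≈ u.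
Proof.
  via (u · cube b · (a · a) · (a · a) · b).
  via (u · cube b · b).
  via (u · (b · b) · (b · b)).
  B234_step.
Qed.

Lemma translation_cancel_r a b u : u · a · b · cube b · cube a ≈ u.
Proof. rewrite translations_commute. apply translation_cancel. Qed.

Lemma translation_Op_r e s a b u : s · (u · a · b) ≈ s · u · (cube e · a) · (e · b).
Proof.
  via (s · (e · e) · (e · e) · (u · a · b)).
  via (s · cube e · e · (u · a · b)).
  via (s · cube e · (u · a) · (e · b)).
  B234_step.
Qed.

Inductive kind := K0 | K1 | K2.

Definition kind_eqb (k k' : kind) : bool :=
  match k, k' with K0, K0 | K1, K1 | K2, K2 => true | _, _ => false end.

Definition slot : Type := nat * kind.

Definition slot_eqb (s s' : slot) : bool :=
  Nat.eqb (fst s) (fst s') && kind_eqb (snd s) (snd s').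

Lemma slot_eqb_spec s s' : reflect (s = s') (slot_eqb s s').
Proof.
  destruct s as [n k], s' as [n' k']; unfold slot_eqb; cbn.
  destruct (Nat.eqb_spec n n'); [subst | constructor; congruence].
  destruct k, k'; constructor; congruence.
Qed.

(* The generators: slot (n, k) stands for the right translation u ↦ u · a · b
   with (a, b) = gen_args (n, k); there are three generators per variable. *)
Definition gen_args (s : slot) : term * term :=
  match s with
  | (O, K0) => (x · x, x3)
  | (O, K1) => (x · (x · x), x3)
  | (O, K2) => (x, x)
  | (S _ as n, K0) => (Var n, x3)
  | (S _ as n, K1) => (x3, Var n)
  | (S _ as n, K2) => (x · Var n, x3)
  end.

Record letter := Letter { lslot : slot; lpos : bool }.

Definition gen (n : nat) (k : kind) : letter := Letter (n, k) true.

Definition letter_inv (g : letter) : letter := Letter (lslot g) (negb (lpos g)).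

Definition letter_eq_dec (g h : letter) : {g = h} + {g <> h}.
Proof.
  decide equality; [apply bool_dec | decide equality; [decide equality | apply Nat.eq_dec]].
Defined.

Definition letter_args (g : letter) : term * term :=
  let '(a, b) := gen_args (lslot g) in if lpos g then (a, b) else (cube b, cube a).

Definition act (g : letter) (u : term) : term := u · fst (letter_args g) · snd (letter_args g).

Fixpoint actw (w : list letter) (u : term) : term :=
  match w with [] => u | g :: w' => act g (actw w' u) end.

(* No reversal is needed: letters commute up to ≈. *)
Definition word_inv (w : list letter) : list letter := map letter_inv w.

#[global] Instance act_Proper g : Proper (consequence B234 ==> consequence B234) (act g).
Proof. intros u u' H. unfold act. rewrite H. reflexivity. Qed.

#[global] Instance actw_Proper w : Proper (consequence B234 ==> consequence B234) (actw w).
Proof.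
  induction w as [|g w IH]; intros u u' H; cbn; [exact H | rewrite (IH _ _ H); reflexivity].
Qed.

Lemma actw_app w1 w2 u : actw (w1 ++ w2) u = actw w1 (actw w2 u).
Proof. induction w1 as [|g w1 IH]; cbn; congruence. Qed.

Lemma act_comm g h u : act g (act h u) ≈ act h (act g u).
Proof. apply translations_commute. Qed.

Lemma act_actw_comm g w u : act g (actw w u) ≈ actw w (act g u).
Proof. induction w as [|h w IH]; cbn; [reflexivity|]. rewrite act_comm, IH. reflexivity. Qed.

Lemma act_inv g u : act g (act (letter_inv g) u) ≈ u.
Proof.
  destruct g as [s []]; unfold act, letter_inv, letter_args; cbn;
    destruct (gen_args s) as [a b]; cbn.
  - apply translation_cancel.
  - apply translation_cancel_r.
Qed.

Definition sign (g : letter) : Z := if lpos g then 1 else -1.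

Definition weight (g : letter) (s : slot) : Z := if slot_eqb (lslot g) s then sign g else 0.

Fixpoint exponent (w : list letter) (s : slot) : Z :=
  match w with [] => 0 | g :: w' => weight g s + exponent w' s end.

Lemma exponent_app w1 w2 s : exponent (w1 ++ w2) s = exponent w1 s + exponent w2 s.
Proof. induction w1 as [|g w1 IH]; cbn; lia. Qed.

Lemma weight_inv g s : weight (letter_inv g) s = - weight g s.
Proof. unfold weight, sign; cbn. destruct (slot_eqb _ _), (lpos g); reflexivity. Qed.

Lemma exponent_word_inv w s : exponent (word_inv w) s = - exponent w s.
Proof.
  unfold word_inv; induction w as [|g w IH]; cbn; [reflexivity|].
  rewrite weight_inv, IH. lia.
Qed.

Lemma exponent_without_inv g w :
  ~ In (letter_inv g) w -> 0 <= sign g * exponent w (lslot g).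
Proof.
  induction w as [|h w IH]; intros Hw; cbn; [lia|].
  assert (IHw : 0 <= sign g * exponent w (lslot g))
    by (apply IH; intros Hi; apply Hw; right; exact Hi).
  unfold weight; destruct (slot_eqb_spec (lslot h) (lslot g)) as [Hs|]; [|lia].
  destruct (bool_dec (lpos h) (lpos g)) as [Hp|Hp].
  - unfold sign in *; rewrite Hp; destruct (lpos g); lia.
  - exfalso; apply Hw; left.
    destruct h as [sh ph], g as [sg pg]; cbn in *; subst.
    unfold letter_inv; cbn; destruct ph, pg; cbn; congruence.
Qed.

Lemma inv_in_balanced_word g w :
  exponent (g :: w) (lslot g) = 0 -> In (letter_inv g) w.
Proof.
  intros H. destruct (in_dec letter_eq_dec (letter_inv g) w) as [|Hn]; [assumption|].
  exfalso. apply exponent_without_inv in Hn. cbn in H.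
  unfold weight in H. destruct (slot_eqb_spec (lslot g) (lslot g)); [|congruence].
  unfold sign in *; destruct (lpos g); lia.
Qed.

Lemma actw_zero_exponents w u : (forall s, exponent w s = 0) -> actw w u ≈ u.
Proof.
  induction w as [w IH] using (well_founded_ind (well_founded_ltof _ (@length letter))).
  destruct w as [|g w]; intros Hw; cbn; [reflexivity|].
  destruct (in_split _ _ (inv_in_balanced_word g w (Hw _))) as (w1 & w2 & ->).
  rewrite actw_app; cbn [actw]. rewrite <- act_actw_comm, act_inv, <- actw_app.
  apply IH.
  - unfold ltof; cbn. rewrite !length_app; cbn. lia.
  - intros s. specialize (Hw s). cbn in Hw. rewrite !exponent_app in *. cbn in Hw.
    rewrite weight_inv in Hw. lia.
Qed.

Lemma actw_word_inv w u : actw (word_inv w) (actw w u) ≈ u.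
Proof.
  rewrite <- actw_app. apply actw_zero_exponents. intros s.
  rewrite exponent_app, exponent_word_inv. lia.
Qed.

Lemma actw_word_inv_r w u : actw w (actw (word_inv w) u) ≈ u.
Proof.
  rewrite <- actw_app. apply actw_zero_exponents. intros s.
  rewrite exponent_app, exponent_word_inv. lia.
Qed.

Lemma actw_same_exponents w w' u :
  (forall s, exponent w s = exponent w' s) -> actw w u ≈ actw w' u.
Proof.
  intros H. rewrite <- (actw_word_inv w' u) at 1. rewrite <- actw_app.
  apply actw_zero_exponents. intros s.
  rewrite exponent_app, exponent_word_inv, H. lia.
Qed.

Lemma left_x_K0 u : actw [gen 0 K0; gen 0 K2] u · x3 · (x · x) ≈ u.
Proof.
  cbn.
  via (u · x · x3 · (x · x) · x · x3 · (x · x)).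
  via (u · x · x3 · (x · x) · (x · x) · x3 · x).
  via (u · x · x3 · (x · x) · (x · x) · (x · x) · (x · x)).
  via (u · (x · x) · (x · x) · (x · x) · (x · x) · (x · x) · (x · x)).
  via (u · (x · x) · (x · x) · (x · x) · (x · x)).
  via (u · (x · x) · (x · x)).
  B234_step.
Qed.

Lemma left_x_K1 u : actw [gen 0 K1] u · x3 · (x · (x · x)) ≈ u.
Proof.
  cbn.
  via (u · (x · (x · x)) · (x · (x · x)) · x3 · x3).
  via (u · (x · (x · x) · (x · x)) · x · x3 · x3).
  via (u · x3 · x · (x · (x · x) · (x · x)) · x3).
  via (u · x3 · x · (x · x) · (x · (x · x) · (x · x) · x)).
  via (u · x3 · x · (x · x) · (x · x)).
  via (u · x3 · x).
  via (u · (x · x) · (x · x)).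
  B234_step.
Qed.

Lemma left_var_K2 n u :
  actw [gen (S n) K0; gen (S n) K1; gen (S n) K2; gen 0 K2] u · x3 · (x · Var (S n)) ≈ u.
Proof.
  cbn. set (v := Var (S n)).
  via (u · x · x · (x · v) · v · x3 · x3 · v · x3 · x3 · (x · v)).
  via (u · x · x · (v · v) · x · x3 · x3 · v · x3 · x3 · (x · v)).
  via (u · x · x · (v · v) · x3 · x3 · x · v · x3 · x3 · (x · v)).
  via (u · x · x · (v · v) · x3 · (x · x) · (x · x) · v · x3 · x3 · (x · v)).
  via (u · x · x3 · (v · v) · x · (x · x) · (x · x) · v · x3 · x3 · (x · v)).
  via (u · x · x3 · (v · v) · (x · x) · (x · x) · x · v · x3 · x3 · (x · v)).
  via (u · x · x3 · (v · v) · (x · x) · (x · x) · x3 · v · x · x3 · (x · v)).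
  via (u · x · x3 · (v · v) · (x · x) · (x · x) · x3 · v · (x · v) · x3 · x).
  via (u · x · x3 · (v · v) · (x · x) · (x · x) · x3 · v · (x · v) · (x · x) · (x · x)).
  via (u · x · x3 · (v · v) · (x · x) · (x · x) · x3 · x · (v · v) · (x · x) · (x · x)).
  via (u · (x · x) · (x · x) · (v · v) · (x · x) · (x · x) · x3 · x · (v · v) · (x · x) · (x · x)).
  via (u · (x · x) · (x · x) · (v · v) · (x · x) · (x · x) · (v · v) · x · x3 · (x · x) · (x · x)).
  via (u · (x · x) · (x · x) · (v · v) · (v · v) · (x · x) · (x · x) · x · x3 · (x · x) · (x · x)).
  via (u · (x · x) · (x · x) · (x · x) · (x · x) · x · x3 · (x · x) · (x · x)).
  via (u · (x · x) · (x · x) · x · x3 · (x · x) · (x · x)).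
  via (u · x · x3 · (x · x) · (x · x)).
  via (u · x · x3).
  via (u · (x · x) · (x · x)).
  B234_step.
Qed.

Lemma right_x_K0 u : actw [gen 0 K0] u · (x3 · (x · x)) · (x · x3) ≈ actw [gen 0 K1] u.
Proof.
  cbn.
  via (u · (x · x) · (x · x3) · (x3 · (x · x)) · x3).
  via (u · (x · x3 · x) · x · (x3 · (x · x)) · x3).
  via (u · (x · (x · x) · (x · x)) · x · (x3 · (x · x)) · x3).
  via (u · x · x · (x3 · (x · x)) · x3).
  via (u · (x3 · (x · x)) · x · x · x3).
  via (u · (x3 · (x · x)) · x · (x · x) · (x · x)).
  via (u · (x3 · (x · x)) · x).
  B234_step.
Qed.

Lemma right_x_K1 u : u · (x3 · (x · (x · x))) · (x · x3) ≈ actw [gen 0 K1] u.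
Proof.
  cbn.
  via (u · (x · x3 · (x · (x · x))) · x3).
  via (u · (x · x · (x3 · (x · x))) · x3).
  via (u · (x · (x · x · (x · x) · (x · x))) · x3).
  B234_step.
Qed.

Lemma right_x_K2 u : actw [gen 0 K2] u · (x3 · x) · (x · x) ≈ u.
Proof.
  cbn.
  via (u · x · (x · x) · (x3 · x) · x).
  via (u · x · (x · x) · (x · x) · x3).
  via (u · x · x3 · (x · x) · (x · x)).
  via (u · x · x3).
  via (u · (x · x) · (x · x)).
  B234_step.
Qed.

Lemma right_var_K0 n u :
  actw [gen 0 K0] u · (x3 · Var (S n)) · (x · x3) ≈ actw [gen (S n) K2] u.
Proof.
  cbn. set (v := Var (S n)).
  via (u · (x · x) · (x · x3) · (x3 · v) · x3).
  via (u · (x · x3 · x) · x · (x3 · v) · x3).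
  via (u · (x · (x · x) · (x · x)) · x · (x3 · v) · x3).
  via (u · x · x · (x3 · v) · x3).
  via (u · (x3 · v) · x · x · x3).
  via (u · (x3 · v) · x · (x · x) · (x · x)).
  via (u · (x3 · v) · x).
  B234_step.
Qed.

Lemma right_var_K1 n u :
  actw [gen (S n) K0; gen (S n) K1; gen (S n) K2] u · (x3 · x3) · (x · Var (S n))
  ≈ actw [gen 0 K0] u.
Proof.
  cbn. set (v := Var (S n)).
  via (u · (x · v) · v · x3 · x3 · v · x3 · (x3 · x3) · (x · v)).
  via (u · (v · v) · x · x3 · x3 · v · x3 · (x3 · x3) · (x · v)).
  via (u · (v · v) · x · x3 · x3 · (x3 · x3) · x3 · v · (x · v)).
  via (u · (v · v) · x · x3 · x3 · (x3 · x3) · x3 · x · (v · v)).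
  via (u · (v · v) · x · x3 · x3 · (x3 · x3) · (v · v) · x · x3).
  via (u · (v · v) · x · x3 · (v · v) · (x3 · x3) · x3 · x · x3).
  via (u · (v · v) · (v · v) · x3 · x · (x3 · x3) · x3 · x · x3).
  via (u · x3 · x · (x3 · x3) · x3 · x · x3).
  via (u · x3 · x · (x · x · (x · x) · (x · x)) · x3 · x · x3).
  via (u · x3 · x · (x · x) · x3 · x · x3).
  via (u · x3 · x · x · x3 · (x · x) · x3).
  via (u · x3 · x · (x · x) · (x · x) · (x · x) · x3).
  via (u · x3 · x · (x · x) · x3).
  via (u · (x · x) · (x · x) · (x · x) · x3).
  B234_step.
Qed.

Lemma right_var_K2 n u :
  actw [gen 0 K0] u · (x3 · (x · Var (S n))) · (x · x3) ≈ actw [gen (S n) K0; gen 0 K1] u.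
Proof.
  cbn. set (v := Var (S n)).
  via (u · (x · x) · (x · x3) · (x3 · (x · v)) · x3).
  via (u · (x · x3 · x) · x · (x3 · (x · v)) · x3).
  via (u · (x3 · (x · v)) · x · (x · x3 · x) · x3).
  via (u · (x3 · (x · v)) · x · (x · x) · (x · x3 · x · x)).
  via (u · (x3 · (x · v)) · x · (x · x) · (x · (x · x) · (x · x) · x)).
  via (u · (x3 · (x · v)) · x · (x · x) · (x · x)).
  via (u · (x3 · (x · v)) · (x · x) · (x · x) · x).
  via (u · (x · x · (x · v)) · x3 · (x · x) · x).
  via (u · (v · x · (x · x)) · x3 · (x · x) · x).
  via (u · (v · x · (x · x)) · x · (x · x) · x3).
  via (u · (x · (x · x)) · (v · x) · (x · x) · x3).
  via (u · (x · x) · (v · x) · (x · (x · x)) · x3).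
  via (u · v · x3 · (x · (x · x)) · x3).
  B234_step.
Qed.

Lemma var_normal_form n :
  actw [gen (S n) K0; gen (S n) K1; gen (S n) K2] (Var (S n)) ≈ actw [gen 0 K0] x.
Proof.
  cbn. set (v := Var (S n)).
  via (v · (x · v) · v · x3 · x3 · v · x3).
  via (v · (v · v) · x · x3 · x3 · v · x3).
  via (v · (v · v) · x · v · x3 · x3 · x3).
  via (v · (v · v) · x · (x · x) · (v · x) · x3 · x3).
  via (v · (v · v) · (v · x) · (x · x) · x · x3 · x3).
  via (x · (v · v) · (v · v) · (x · x) · x · x3 · x3).
  via (x · (x · x) · x · x3 · x3).
  via (x · (x · x) · x3 · x3 · x).
  via (x · (x · x) · x3 · (x · x) · (x · x)).
  via (x · (x · x) · (x · x) · (x · x) · x3).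
  B234_step.
Qed.

Lemma square_normal_form : actw [gen 0 K1] (x · x) ≈ actw [gen 0 K0; gen 0 K2] x.
Proof.
  cbn.
  via (x · x · (x · x) · (x · (x · x) · x)).
  via (x · (x · x) · (x · (x · x) · (x · x))).
  via (x · (x · x) · x).
  via (x · (x · x) · x · (x · x) · (x · x)).
  via (x · (x · x) · x · x · x3).
  B234_step.
Qed.

Lemma translation_as_word a b W1 W2 :
  (forall u, actw W1 u · a · b ≈ actw W2 u) ->
  forall u, u · a · b ≈ actw (W2 ++ word_inv W1) u.
Proof.
  intros H u. rewrite actw_app, <- H, actw_word_inv_r. reflexivity.
Qed.

Lemma translation_inv_as_word a b W :
  (forall u, u · a · b ≈ actw W u) -> forall u, u · cube b · cube a ≈ actw (word_inv W) u.
Proof.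
  intros H u. rewrite <- (actw_word_inv W (u · cube b · cube a)), <- H.
  rewrite translation_cancel. reflexivity.
Qed.

Lemma right_translation_inv_as_word a b W :
  (forall u, u · (x3 · a) · (x · b) ≈ actw W u) ->
  forall s u, s · u · (x3 · cube b) · (x · cube a) ≈ actw (word_inv W) (s · u).
Proof.
  intros H s u. rewrite <- (actw_word_inv W (s · u · _ · _)), <- H.
  rewrite <- (translation_Op_r x s (cube b) (cube a) u), <- translation_Op_r.
  rewrite translation_cancel. reflexivity.
Qed.

(* Moving a translation out of a left (resp. right) factor turns u ↦ u · a · b into
   u ↦ u · b · a (resp. u ↦ u · (x3 · a) · (x · b)); these are again words. *)
Definition left_gen (s : slot) : list letter :=
  match s with
  | (O, K0) => word_inv [gen 0 K0; gen 0 K2]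
  | (O, K1) => word_inv [gen 0 K1]
  | (O, K2) => [gen 0 K2]
  | (S _ as n, K0) => [gen n K1]
  | (S _ as n, K1) => [gen n K0]
  | (S _ as n, K2) => word_inv [gen n K0; gen n K1; gen n K2; gen 0 K2]
  end.

Definition right_gen (s : slot) : list letter :=
  match s with
  | (O, K0) => [gen 0 K1] ++ word_inv [gen 0 K0]
  | (O, K1) => [gen 0 K1]
  | (O, K2) => word_inv [gen 0 K2]
  | (S _ as n, K0) => [gen n K2] ++ word_inv [gen 0 K0]
  | (S _ as n, K1) => [gen 0 K0] ++ word_inv [gen n K0; gen n K1; gen n K2]
  | (S _ as n, K2) => [gen n K0; gen 0 K1] ++ word_inv [gen 0 K0]
  end.

Lemma left_gen_spec s u : u · snd (gen_args s) · fst (gen_args s) ≈ actw (left_gen s) u.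
Proof.
  destruct s as [[|n] []]; cbn [gen_args fst snd left_gen].
  - exact (translation_as_word _ _ _ [] left_x_K0 u).
  - exact (translation_as_word _ _ _ [] left_x_K1 u).
  - reflexivity.
  - reflexivity.
  - reflexivity.
  - exact (translation_as_word _ _ _ [] (left_var_K2 n) u).
Qed.

Lemma right_gen_spec s u :
  u · (x3 · fst (gen_args s)) · (x · snd (gen_args s)) ≈ actw (right_gen s) u.
Proof.
  destruct s as [[|n] []]; cbn [gen_args fst snd right_gen].
  - exact (translation_as_word _ _ _ _ right_x_K0 u).
  - exact (right_x_K1 u).
  - exact (translation_as_word _ _ _ [] right_x_K2 u).
  - exact (translation_as_word _ _ _ _ (right_var_K0 n) u).
  - exact (translation_as_word _ _ _ _ (right_var_K1 n) u).
  - exact (translation_as_word _ _ _ _ (right_var_K2 n) u).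
Qed.

Definition left_word (g : letter) : list letter :=
  if lpos g then left_gen (lslot g) else word_inv (left_gen (lslot g)).

Definition right_word (g : letter) : list letter :=
  if lpos g then right_gen (lslot g) else word_inv (right_gen (lslot g)).

Lemma left_word_spec g u :
  u · snd (letter_args g) · fst (letter_args g) ≈ actw (left_word g) u.
Proof.
  destruct g as [s []]; unfold left_word, letter_args; cbn [lslot lpos].
  - pose proof (left_gen_spec s u). destruct (gen_args s); exact H.
  - pose proof (left_gen_spec s). destruct (gen_args s) as [a b].
    exact (translation_inv_as_word _ _ _ H u).
Qed.

Lemma right_word_spec g s u :
  s · u · (x3 · fst (letter_args g)) · (x · snd (letter_args g))
  ≈ actw (right_word g) (s · u).
Proof.
  destruct g as [sl []]; unfold right_word, letter_args; cbn [lslot lpos].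
  - pose proof (right_gen_spec sl (s · u)). destruct (gen_args sl); exact H.
  - pose proof (right_gen_spec sl). destruct (gen_args sl) as [a b].
    exact (right_translation_inv_as_word _ _ _ H s u).
Qed.

Lemma actw_Op_l w u s : actw w u · s ≈ actw (flat_map left_word w) (u · s).
Proof.
  induction w as [|g w IH]; cbn [actw flat_map]; [reflexivity|].
  unfold act. rewrite M3, IH, left_word_spec, actw_app. reflexivity.
Qed.

Lemma actw_Op_r w s u : s · actw w u ≈ actw (flat_map right_word w) (s · u).
Proof.
  induction w as [|g w IH]; cbn [actw flat_map]; [reflexivity|].
  unfold act. rewrite (translation_Op_r x), right_word_spec, IH, actw_app. reflexivity.
Qed.

Lemma normal_form s : exists w, s ≈ actw w x.
Proof.
  induction s as [[|n] | a [wa Ha] b [wb Hb]].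
  - exists []. reflexivity.
  - exists (word_inv [gen (S n) K0; gen (S n) K1; gen (S n) K2] ++ [gen 0 K0]).
    rewrite actw_app, <- var_normal_form, actw_word_inv. reflexivity.
  - exists (flat_map left_word wa ++ flat_map right_word wb
            ++ word_inv [gen 0 K1] ++ [gen 0 K0; gen 0 K2]).
    rewrite Ha, Hb, actw_Op_l, actw_Op_r, !actw_app, <- square_normal_form, actw_word_inv.
    reflexivity.
Qed.

Lemma eval_subst f r sg s : eval f r (subst sg s) = eval f (fun n => eval f r (sg n)) s.
Proof. induction s; cbn; congruence. Qed.

Lemma holds_in_consequence f :
  (forall l r, B234 l r -> holds_in f l r) -> forall s s', s ≈ s' -> holds_in f s s'.
Proof.
  intros Hax s s' H; induction H; intros r; cbn.
  - rewrite !eval_subst. apply Hax. assumption.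
  - reflexivity.
  - symmetry. apply IHconsequence.
  - rewrite IHconsequence1. apply IHconsequence2.
  - rewrite IHconsequence1, IHconsequence2. reflexivity.
Qed.

Lemma B234_in_Sigma234 l r : B234 l r -> Sigma234 l r.
Proof.
  cbv [B234 B234_list In]. intros H.
  repeat destruct H as [H|H]; try contradiction; injection H as <- <-;
    repeat split; intros v; cbn; unfold op1, op2, op3; lia.
Qed.

Lemma B234_sound s s' : s ≈ s' -> Sigma234 s s'.
Proof.
  intros H. repeat split; revert s s' H; apply holds_in_consequence;
    intros l r Hlr; apply B234_in_Sigma234 in Hlr; apply Hlr.
Qed.

Definition shift (f : Z -> Z -> Z) (p q : Z) : Z := f (f 0 p) q.

Definition affine_model (f : Z -> Z -> Z) : Prop :=
  (forall a p q, f (f a p) q = a + shift f p q) /\ (forall s s', s ≈ s' -> holds_in f s s').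

Lemma op1_model : affine_model op1.
Proof. split; [unfold shift, op1; lia | intros s s' H; apply (B234_sound s s' H)]. Qed.

Lemma op2_model : affine_model op2.
Proof. split; [unfold shift, op2; lia | intros s s' H; apply (B234_sound s s' H)]. Qed.

Lemma op3_model : affine_model op3.
Proof. split; [unfold shift, op3; lia | intros s s' H; apply (B234_sound s s' H)]. Qed.

Definition letter_shift f r (g : letter) : Z :=
  shift f (eval f r (fst (letter_args g))) (eval f r (snd (letter_args g))).

Fixpoint word_shift f r (w : list letter) : Z :=
  match w with [] => 0 | g :: w' => letter_shift f r g + word_shift f r w' end.

Lemma eval_actw f r w u : affine_model f -> eval f r (actw w u) = eval f r u + word_shift f r w.
Proof.
  intros [Hf _]. induction w as [|g w IH]; cbn; [lia|].
  unfold act, letter_shift; cbn. rewrite Hf, IH. lia.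
Qed.

Lemma normal_form_shifts f s s' w w' :
  affine_model f -> s ≈ actw w x -> s' ≈ actw w' x -> holds_in f s s' ->
  forall r, word_shift f r w = word_shift f r w'.
Proof.
  intros Hf Hw Hw' H r. specialize (H r).
  rewrite (proj2 Hf _ _ Hw r), (proj2 Hf _ _ Hw' r), !(eval_actw f r _ _ Hf) in H.
  lia.
Qed.

Lemma word_shift_filter f r p w :
  word_shift f r w
  = word_shift f r (filter p w) + word_shift f r (filter (fun g => negb (p g)) w).
Proof. induction w as [|g w IH]; cbn; [reflexivity|]. destruct (p g); cbn; lia. Qed.

Lemma weight_other g s : lslot g <> s -> weight g s = 0.
Proof. intros H. unfold weight. destruct (slot_eqb_spec (lslot g) s); congruence. Qed.

Lemma exponent_filter q w s :
  exponent (filter (fun g => q (lslot g)) w) s = if q s then exponent w s else 0.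
Proof.
  induction w as [|g w IH]; cbn; [destruct (q s); reflexivity|].
  destruct (slot_eqb_spec (lslot g) s) as [<-|Hne].
  - destruct (q (lslot g)); cbn; rewrite IH; lia.
  - destruct (q (lslot g)); cbn; rewrite !(weight_other g s Hne), IH; destruct (q s); lia.
Qed.

Lemma word_shift_local f r n w c0 c1 c2 :
  (forall g, In g w -> letter_shift f r g =
     weight g (n, K0) * c0 + weight g (n, K1) * c1 + weight g (n, K2) * c2) ->
  word_shift f r w
  = exponent w (n, K0) * c0 + exponent w (n, K1) * c1 + exponent w (n, K2) * c2.
Proof.
  induction w as [|g w IH]; intros H; cbn; [lia|].
  rewrite (H g (or_introl eq_refl)), IH by (intros h Hh; apply H; right; exact Hh). lia.
Qed.

Definition indicator (n m : nat) : Z := if Nat.eqb m n then 1 else 0.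

Lemma letter_shift_var m g :
  letter_shift op1 (indicator (S m)) g =
    weight g (S m, K0) * -1 + weight g (S m, K1) * -1 + weight g (S m, K2) * 1 /\
  letter_shift op2 (indicator (S m)) g =
    weight g (S m, K0) * -1 + weight g (S m, K1) * 1 + weight g (S m, K2) * -1 /\
  letter_shift op3 (indicator (S m)) g =
    weight g (S m, K0) * 1 + weight g (S m, K1) * -1 + weight g (S m, K2) * -1.
Proof.
  destruct g as [[[|n] []] []];
    unfold letter_shift, weight, slot_eqb, sign, shift, indicator, op1, op2, op3; cbn;
    try destruct (Nat.eqb n m); cbn; lia.
Qed.

Lemma letter_shift_x g : fst (lslot g) = 0%nat ->
  letter_shift op1 (indicator 0) g =
    weight g (0%nat, K0) * 1 + weight g (0%nat, K1) * 0 + weight g (0%nat, K2) * -2 /\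
  letter_shift op2 (indicator 0) g =
    weight g (0%nat, K0) * 1 + weight g (0%nat, K1) * 2 + weight g (0%nat, K2) * 0 /\
  letter_shift op3 (indicator 0) g =
    weight g (0%nat, K0) * -3 + weight g (0%nat, K1) * 0 + weight g (0%nat, K2) * 0.
Proof.
  destruct g as [[n []] []]; cbn; intros ->;
    unfold letter_shift, weight, slot_eqb, sign, shift, indicator, op1, op2, op3; cbn; lia.
Qed.

Lemma exponent_var_determined w w' m :
  word_shift op1 (indicator (S m)) w = word_shift op1 (indicator (S m)) w' ->
  word_shift op2 (indicator (S m)) w = word_shift op2 (indicator (S m)) w' ->
  word_shift op3 (indicator (S m)) w = word_shift op3 (indicator (S m)) w' ->
  forall k, exponent w (S m, k) = exponent w' (S m, k).
Proof.
  rewrite !(word_shift_local op1 _ (S m) _ (-1) (-1) 1)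
    by (intros g _; apply letter_shift_var).
  rewrite !(word_shift_local op2 _ (S m) _ (-1) 1 (-1))
    by (intros g _; apply letter_shift_var).
  rewrite !(word_shift_local op3 _ (S m) _ 1 (-1) (-1))
    by (intros g _; apply letter_shift_var).
  intros E1 E2 E3 []; lia.
Qed.

Lemma exponent_x_determined w w' :
  (forall g, In g w -> fst (lslot g) = 0%nat) ->
  (forall g, In g w' -> fst (lslot g) = 0%nat) ->
  word_shift op1 (indicator 0) w = word_shift op1 (indicator 0) w' ->
  word_shift op2 (indicator 0) w = word_shift op2 (indicator 0) w' ->
  word_shift op3 (indicator 0) w = word_shift op3 (indicator 0) w' ->
  forall k, exponent w (0%nat, k) = exponent w' (0%nat, k).
Proof.
  intros Hw Hw'.
  rewrite !(word_shift_local op1 _ 0 _ 1 0 (-2))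
    by (intros g Hg; apply letter_shift_x; auto).
  rewrite !(word_shift_local op2 _ 0 _ 1 2 0)
    by (intros g Hg; apply letter_shift_x; auto).
  rewrite !(word_shift_local op3 _ 0 _ (-3) 0 0)
    by (intros g Hg; apply letter_shift_x; auto).
  intros E1 E2 E3 []; lia.
Qed.

Definition on_x (s : slot) : bool := Nat.eqb (fst s) 0.

Definition x_part (w : list letter) : list letter := filter (fun g => on_x (lslot g)) w.

Definition var_part (w : list letter) : list letter := filter (fun g => negb (on_x (lslot g))) w.

Lemma x_part_on_x w g : In g (x_part w) -> fst (lslot g) = 0%nat.
Proof. intros Hg. apply filter_In in Hg as [_ Hg]. apply Nat.eqb_eq, Hg. Qed.

(* The letters of the other variables also shift the value at x, but by the same
   amount in both words, since their exponents already agree. *)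
Lemma x_part_shift f r w w' :
  affine_model f ->
  (forall m k, exponent w (S m, k) = exponent w' (S m, k)) ->
  word_shift f r w = word_shift f r w' ->
  word_shift f r (x_part w) = word_shift f r (x_part w').
Proof.
  intros Hf Hvar E.
  assert (Evar : word_shift f r (var_part w) = word_shift f r (var_part w')).
  { apply (normal_form_shifts f (actw (var_part w) x) (actw (var_part w') x));
      auto; try reflexivity.
    apply (proj2 Hf), actw_same_exponents. intros s.
    unfold var_part; rewrite !(exponent_filter (fun s => negb (on_x s))).
    destruct s as [[|m] k]; cbn; auto. }
  rewrite (word_shift_filter f r (fun g => on_x (lslot g)) w),
    (word_shift_filter f r (fun g => on_x (lslot g)) w') in E.
  fold (x_part w) (x_part w') (var_part w) (var_part w') in E. lia.
Qed.

Lemma B234_complete s s' : Sigma234 s s' -> s ≈ s'.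
Proof.
  intros (H1 & H2 & H3).
  destruct (normal_form s) as [w Hw], (normal_form s') as [w' Hw'].
  rewrite Hw, Hw'. apply actw_same_exponents.
  pose proof (normal_form_shifts op1 s s' w w' op1_model Hw Hw' H1) as E1.
  pose proof (normal_form_shifts op2 s s' w w' op2_model Hw Hw' H2) as E2.
  pose proof (normal_form_shifts op3 s s' w w' op3_model Hw Hw' H3) as E3.
  assert (Hvar : forall m k, exponent w (S m, k) = exponent w' (S m, k))
    by (intros m; apply exponent_var_determined; auto).
  assert (Hx : forall k, exponent (x_part w) (0%nat, k) = exponent (x_part w') (0%nat, k)).
  { apply exponent_x_determined; try apply x_part_on_x; apply x_part_shift;
      auto using op1_model, op2_model, op3_model. }
  intros [[|m] k]; [|apply Hvar].
  specialize (Hx k). unfold x_part in Hx. rewrite !exponent_filter in Hx. exact Hx.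
Qed.

Theorem theorem7p1 : is_basis B234 Sigma234.
Proof. intros s s'. split; [apply B234_sound | apply B234_complete]. Qed.
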